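(* Let $X\neq\emptyset$ be a set, $\Phi$ a nonempty set of bounded functions $X\to\mathbb{R}$ that is compact with respect to $D_\Phi$, and $G$ a subgroup of $\mathrm{Homeo}_\Phi(X)$. If $G$ is complete with respect to the pseudo-metric $D_G$, then $G$ is compact with respect to $D_G$.
   Context: $D_\Phi(\varphi_1,\varphi_2):=\|\varphi_1-\varphi_2\|_\infty$. $D_X(x_1,x_2):=\sup_{\varphi\in\Phi}|\varphi(x_1)-\varphi(x_2)|$. $\mathrm{Homeo}_\Phi(X)$ is the group of bijections $g:X\to X$ that are homeomorphisms for the topology of $D_X$ and satisfy $\varphi\circ g\in\Phi$ and $\varphi\circ g^{-1}\in\Phi$ for all $\varphi\in\Phi$. For $g_1,g_2\in G$, $D_G(g_1,g_2):=\sup_{\varphi\in\Phi}D_\Phi(\varphi\circ g_1,\varphi\circ g_2)$. *)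

From Stdlib Require Import Reals List.
Open Scope R_scope.

(* Extended-valued distances given by suprema are encoded through the
   predicate "D a b < r": [dlt a b r]. For a supremum s = sup_i v_i
   (possibly +infinity), "s < r" holds iff there is r' < r bounding all v_i. *)

Definition sup_lt {I : Type} (P : I -> Prop) (v : I -> R) (r : R) : Prop :=
  exists r', r' < r /\ forall i, P i -> v i <= r'.

Definition DPhi_lt {X : Type} (f1 f2 : X -> R) (r : R) : Prop :=
  sup_lt (fun _ : X => True) (fun x => Rabs (f1 x - f2 x)) r.

Definition DX_lt {X : Type} (Phi : (X -> R) -> Prop) (x1 x2 : X) (r : R) : Prop :=
  sup_lt Phi (fun phi => Rabs (phi x1 - phi x2)) r.

(* D_G(g1,g2) = sup_{phi in Phi} D_Phi(phi o g1, phi o g2) *)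
Definition DG_lt {X : Type} (Phi : (X -> R) -> Prop) (g1 g2 : X -> X) (r : R) : Prop :=
  sup_lt (fun p : (X -> R) * X => Phi (fst p))
         (fun p => Rabs (fst p (g1 (snd p)) - fst p (g2 (snd p)))) r.

Definition is_open {T : Type} (dlt : T -> T -> R -> Prop) (U : T -> Prop) : Prop :=
  forall a, U a -> exists r, 0 < r /\ forall b, dlt a b r -> U b.

Definition rel_open {T : Type} (dlt : T -> T -> R -> Prop) (S U : T -> Prop) : Prop :=
  forall a, S a -> U a -> exists r, 0 < r /\ forall b, S b -> dlt a b r -> U b.

Definition compact_set {T : Type} (dlt : T -> T -> R -> Prop) (S : T -> Prop) : Prop :=
  forall (I : Type) (U : I -> T -> Prop),
    (forall i, rel_open dlt S (U i)) ->
    (forall a, S a -> exists i, U i a) ->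
    exists l : list I, forall a, S a -> exists i, In i l /\ U i a.

Definition cauchy_seq {T : Type} (dlt : T -> T -> R -> Prop) (u : nat -> T) : Prop :=
  forall eps, 0 < eps -> exists N, forall m n, (N <= m)%nat -> (N <= n)%nat ->
    dlt (u m) (u n) eps.

Definition seq_conv {T : Type} (dlt : T -> T -> R -> Prop) (u : nat -> T) (l : T) : Prop :=
  forall eps, 0 < eps -> exists N, forall n, (N <= n)%nat -> dlt (u n) l eps.

Definition complete_set {T : Type} (dlt : T -> T -> R -> Prop) (S : T -> Prop) : Prop :=
  forall u : nat -> T, (forall n, S (u n)) -> cauchy_seq dlt u ->
    exists l, S l /\ seq_conv dlt u l.

Definition bounded_fun {X : Type} (f : X -> R) : Prop :=
  exists M, forall x, Rabs (f x) <= M.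

Definition continuous_map {A B : Type} (dA : A -> A -> R -> Prop)
  (dB : B -> B -> R -> Prop) (f : A -> B) : Prop :=
  forall U : B -> Prop, is_open dB U -> is_open dA (fun a => U (f a)).

Definition homeo_Phi {X : Type} (Phi : (X -> R) -> Prop) (g : X -> X) : Prop :=
  exists h : X -> X,
    (forall x, h (g x) = x) /\ (forall x, g (h x) = x) /\
    continuous_map (DX_lt Phi) (DX_lt Phi) g /\
    continuous_map (DX_lt Phi) (DX_lt Phi) h /\
    (forall phi, Phi phi -> Phi (fun x => phi (g x)) /\ Phi (fun x => phi (h x))).

Definition subgroup_Homeo {X : Type} (Phi : (X -> R) -> Prop) (G : (X -> X) -> Prop) : Prop :=
  (forall g, G g -> homeo_Phi Phi g) /\
  G (fun x => x) /\
  (forall g1 g2, G g1 -> G g2 -> G (fun x => g1 (g2 x))) /\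
  (forall g, G g -> exists h, G h /\ (forall x, h (g x) = x) /\ (forall x, g (h x) = x)).

(* The distances of [Homeo_Phi(X)] are controlled by finitely many test
   functions: if [N] is a finite [d]-net of the compact set [Phi], then two
   elements [c], [g] of [G] are [4d]-close for [D_G] as soon as, for every
   [nu] in [N], the functions [nu o c] and [nu o g] lie within [d] of a common
   element of [N].  Since [G] maps [Phi] into itself, every [nu o g] is near
   some point of [N], so [G] falls into finitely many such classes and is
   totally bounded.  A complete, totally bounded pseudo-metric space is
   compact (nested-balls argument). *)

From Stdlib Require Import Reals List Lra Classical ClassicalEpsilon.
Open Scope R_scope.

Lemma Rabs_sub_triang (a b c r s : R) :
  Rabs (a - b) <= r -> Rabs (b - c) <= s -> Rabs (a - c) <= r + s.
Proof.
  intros Hab Hbc.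
  replace (a - c) with ((a - b) + (b - c)) by ring.
  eapply Rle_trans; [apply Rabs_triang | lra].
Qed.

Section SupDistance.
Variables (I : Type) (P : I -> Prop).

Lemma sup_lt_le (v : I -> R) (r : R) : sup_lt P v r -> forall i, P i -> v i <= r.
Proof. intros [r' [Hr' Hv]] i Hi; specialize (Hv i Hi); lra. Qed.

Lemma sup_dist_refl (f : I -> R) (r : R) :
  0 < r -> sup_lt P (fun i => Rabs (f i - f i)) r.
Proof.
  intros Hr; exists 0; split; [exact Hr|].
  intros i _; rewrite Rminus_diag, Rabs_R0; lra.
Qed.

Lemma sup_dist_sym (f g : I -> R) (r : R) :
  sup_lt P (fun i => Rabs (f i - g i)) r -> sup_lt P (fun i => Rabs (g i - f i)) r.
Proof.
  intros [r' [Hr' Hv]]; exists r'; split; [exact Hr'|].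
  intros i Hi; rewrite Rabs_minus_sym; auto.
Qed.

Lemma sup_dist_triang (f g h : I -> R) (r s : R) :
  sup_lt P (fun i => Rabs (f i - g i)) r -> sup_lt P (fun i => Rabs (g i - h i)) s ->
  sup_lt P (fun i => Rabs (f i - h i)) (r + s).
Proof.
  intros [r' [Hr' Hfg]] [s' [Hs' Hgh]]; exists (r' + s'); split; [lra|].
  intros i Hi; apply Rabs_sub_triang with (g i); auto.
Qed.

Lemma sup_lt_weaken (v : I -> R) (r s : R) : sup_lt P v r -> r <= s -> sup_lt P v s.
Proof. intros [r' [Hr' Hv]] Hrs; exists r'; split; [lra | exact Hv]. Qed.

Lemma sup_lt_lower (v : I -> R) (r : R) :
  sup_lt P v r -> exists r', r' < r /\ sup_lt P v r'.
Proof.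
  intros [r' [Hr' Hv]]; exists ((r' + r) / 2); split; [lra|].
  exists r'; split; [lra | exact Hv].
Qed.

End SupDistance.

Definition is_net {T : Type} (close : T -> T -> Prop) (S : T -> Prop) (l : list T) : Prop :=
  forall a, S a -> exists c, In c l /\ close c a.

Definition totally_bounded {T : Type} (dlt : T -> T -> R -> Prop) (S : T -> Prop) : Prop :=
  forall eps, 0 < eps -> exists l, is_net (fun c a => dlt c a eps) S l.

Definition finitely_covered {T I : Type} (U : I -> T -> Prop) (S : T -> Prop) : Prop :=
  exists l : list I, forall a, S a -> exists i, In i l /\ U i a.

Lemma is_net_union {A T : Type} (close : T -> T -> Prop) (outs : list A)
    (S : A -> T -> Prop) :
  (forall b, In b outs -> exists l, is_net close (S b) l) ->
  exists l, is_net close (fun a => exists b, In b outs /\ S b a) l.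
Proof.
  induction outs as [|b outs IH]; intros Hnets.
  - exists nil; intros a [b [[] _]].
  - destruct (Hnets b (or_introl eq_refl)) as [l1 Hcov1].
    destruct IH as [l2 Hcov2]; [intros b' Hb'; apply Hnets; now right|].
    exists (l1 ++ l2); intros a [b' [[<- | Hb'] Ha]].
    + destruct (Hcov1 a Ha) as [c [Hc Hca]].
      exists c; split; [apply in_app_iff; now left | exact Hca].
    + destruct (Hcov2 a (ex_intro _ b' (conj Hb' Ha))) as [c [Hc Hca]].
      exists c; split; [apply in_app_iff; now right | exact Hca].
Qed.

(* Each test [t] has finitely many possible outcomes [b], [R t b a] meaning
   that [a] may produce [b] on [t]; elements are identified by a common
   outcome on every test. *)
Lemma signature_net {A B T : Type} (tests : list A) (outs : list B)
    (R : A -> B -> T -> Prop) (S : T -> Prop) :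
  (forall t a, In t tests -> S a -> exists b, In b outs /\ R t b a) ->
  exists l, is_net (fun c a => S c /\
                      forall t, In t tests -> exists b, R t b c /\ R t b a) S l.
Proof.
  revert S; induction tests as [|t tests IH]; intros S Hout.
  - destruct (classic (exists a, S a)) as [[a0 Ha0] | Hempty].
    + exists (a0 :: nil); intros a _; exists a0; split; [now left | split; [exact Ha0 | intros _ []]].
    + exists nil; intros a Ha; exfalso; eauto.
  - destruct (is_net_union (fun c a => S c /\ forall t', In t' (t :: tests) ->
                              exists b, R t' b c /\ R t' b a)
                outs (fun b a => S a /\ R t b a)) as [l Hcov].
    { intros b _.
      destruct (IH (fun a => S a /\ R t b a)) as [l Hcov].
      { intros t' a Ht' [Ha _]; apply Hout; [now right | exact Ha]. }
      exists l; intros a Ha; destruct (Hcov a Ha) as [c [Hc [[Sc Rc] Hca]]].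
      exists c; split; [exact Hc|]; split; [exact Sc|].
      intros t' [<- | Ht']; [exists b; split; [exact Rc | apply Ha] | apply Hca; exact Ht']. }
    exists l; intros a Ha; destruct (Hout t a (or_introl eq_refl) Ha) as [b [Hb Hta]].
    apply Hcov; exists b; auto.
Qed.

Lemma finitely_covered_net {T I : Type} (U : I -> T -> Prop) (close : T -> T -> Prop)
    (S : T -> Prop) (l : list T) :
  is_net close S l ->
  (forall c, In c l -> finitely_covered U (fun a => S a /\ close c a)) ->
  finitely_covered U S.
Proof.
  intros Hcov Hcells.
  assert (Hunion : exists li, forall c a, In c l -> S a -> close c a ->
                     exists i, In i li /\ U i a).
  { clear Hcov; induction l as [|c l IH].
    - exists nil; intros c a [].
    - destruct (Hcells c (or_introl eq_refl)) as [l1 H1].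
      destruct IH as [l2 H2]; [intros c' Hc'; apply Hcells; now right|].
      exists (l1 ++ l2); intros c' a [<- | Hc'] Ha Hca.
      + destruct (H1 a (conj Ha Hca)) as [i [Hi Hia]].
        exists i; split; [apply in_app_iff; now left | exact Hia].
      + destruct (H2 c' a Hc' Ha Hca) as [i [Hi Hia]].
        exists i; split; [apply in_app_iff; now right | exact Hia]. }
  destruct Hunion as [li Hli]; exists li.
  intros a Ha; destruct (Hcov a Ha) as [c [Hc Hca]]; eauto.
Qed.

Lemma dependent_choice {A : Type} (P : A -> Prop) (Rel : nat -> A -> A -> Prop) (x0 : A) :
  P x0 -> (forall k x, P x -> exists y, P y /\ Rel k x y) ->
  exists u : nat -> A, u O = x0 /\ forall k, P (u k) /\ Rel k (u k) (u (S k)).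
Proof.
  intros H0 Hstep.
  destruct (choice (fun (kx : nat * A) y => P (snd kx) -> P y /\ Rel (fst kx) (snd kx) y))
    as [f Hf].
  { intros [k x]; destruct (classic (P x)) as [Hx | Hx].
    - destruct (Hstep k x Hx) as [y Hy]; exists y; auto.
    - exists x; simpl; intro; contradiction. }
  set (u := fix u k := match k with O => x0 | S k' => f (k', u k') end).
  assert (Hu : forall k, P (u k)).
  { induction k as [|k IH]; [exact H0 | apply (Hf (k, u k)), IH]. }
  exists u; split; [reflexivity|].
  intros k; split; [apply Hu | apply (Hf (k, u k)), Hu].
Qed.

Definition radius (k : nat) : R := / INR (S k).

Lemma radius_pos (k : nat) : 0 < radius k.
Proof. apply Rinv_0_lt_compat, lt_0_INR; auto with arith. Qed.

Lemma radius_small (eps : R) : 0 < eps -> exists k, radius k < eps.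
Proof.
  intros Heps; destruct (archimed_cor1 eps Heps) as [N [HN HN0]].
  exists (pred N); unfold radius; rewrite Nat.succ_pred_pos; assumption.
Qed.

Section PseudoMetric.
Variables (T : Type) (dlt : T -> T -> R -> Prop).
Hypothesis dlt_refl : forall a r, 0 < r -> dlt a a r.
Hypothesis dlt_sym : forall a b r, dlt a b r -> dlt b a r.
Hypothesis dlt_triang : forall a b c r s, dlt a b r -> dlt b c s -> dlt a c (r + s).
Hypothesis dlt_weaken : forall a b r s, dlt a b r -> r <= s -> dlt a b s.
Hypothesis dlt_lower : forall a b r, dlt a b r -> exists r', r' < r /\ dlt a b r'.

Lemma compact_net (Y : T -> Prop) (eps : R) :
  compact_set dlt Y -> 0 < eps -> exists l, is_net (fun c a => Y c /\ dlt c a eps) Y l.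
Proof.
  intros Hcomp Heps.
  destruct (Hcomp T (fun c a => Y c /\ dlt c a eps)) as [l Hl].
  - intros c a _ [Hc Hca].
    destruct (dlt_lower _ _ _ Hca) as [r' [Hr' Hcar']].
    exists (eps - r'); split; [lra|]; intros b _ Hab; split; [exact Hc|].
    replace eps with (r' + (eps - r')) by ring; apply dlt_triang with a; assumption.
  - intros a Ha; exists a; split; [exact Ha | apply dlt_refl, Heps].
  - exists l; exact Hl.
Qed.

Lemma totally_bounded_subset (Y Y' : T -> Prop) :
  (forall a, Y' a -> Y a) -> totally_bounded dlt Y -> totally_bounded dlt Y'.
Proof.
  intros HYY' Htb eps Heps; destruct (Htb eps Heps) as [l Hl].
  exists l; intros a Ha; apply Hl, HYY', Ha.
Qed.

Lemma uncovered_ball {I : Type} (U : I -> T -> Prop) (Y : T -> Prop) (eps : R) :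
  totally_bounded dlt Y -> 0 < eps -> ~ finitely_covered U Y ->
  exists c, ~ finitely_covered U (fun a => Y a /\ dlt c a eps).
Proof.
  intros Htb Heps Hnc; destruct (Htb eps Heps) as [l Hl].
  apply NNPP; intros Hall; apply Hnc, (finitely_covered_net U _ Y l Hl).
  intros c _; apply NNPP; intros Hc; apply Hall; eauto.
Qed.

Lemma uncovered_nested_sets {I : Type} (U : I -> T -> Prop) (Y : T -> Prop) :
  totally_bounded dlt Y -> ~ finitely_covered U Y ->
  exists A : nat -> T -> Prop, forall k,
    ~ finitely_covered U (A k) /\ (forall a, A k a -> Y a) /\
    exists c, forall a, A (S k) a -> A k a /\ dlt c a (radius k).
Proof.
  intros Htb Hnc.
  destruct (dependent_choice
              (fun A => ~ finitely_covered U A /\ forall a, A a -> Y a)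
              (fun k A A' => exists c, forall a, A' a -> A a /\ dlt c a (radius k)) Y)
    as [A [_ HA]]; [split; auto|..].
  - intros k A [HAnc HAS].
    destruct (uncovered_ball U A (radius k)) as [c Hc];
      [exact (totally_bounded_subset Y A HAS Htb) | apply radius_pos | exact HAnc|].
    exists (fun a => A a /\ dlt c a (radius k)); split.
    + split; [exact Hc | intros a [Ha _]; apply HAS, Ha].
    + exists c; intros a Ha; exact Ha.
  - exists A; intros k; destruct (HA k) as [[HAnc HAS] Hc]; auto.
Qed.

Lemma complete_totally_bounded_compact (Y : T -> Prop) :
  complete_set dlt Y -> totally_bounded dlt Y -> compact_set dlt Y.
Proof.
  intros Hcomplete Htb I U Uopen Ucov.
  apply NNPP; intros Hnc.
  destruct (uncovered_nested_sets U Y Htb Hnc) as [A HA].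
  assert (Hdecr : forall k m, (k <= m)%nat -> forall a, A m a -> A k a).
  { intros k m Hkm; induction Hkm as [|m _ IH]; auto.
    intros a Ha; apply IH; destruct (HA m) as [_ [_ [c Hc]]]; apply (Hc a Ha). }
  destruct (choice (fun k a => A k a)) as [u Hu].
  { intros k; apply NNPP; intros Hempty; apply (proj1 (HA k)).
    exists nil; intros a Ha; exfalso; eauto. }
  destruct (Hcomplete u) as [l [Hl Hlim]].
  - intros k; apply (proj1 (proj2 (HA k))), Hu.
  - intros eps Heps; destruct (radius_small (eps / 2)) as [k Hk]; [lra|].
    destruct (HA k) as [_ [_ [c Hc]]]; exists (S k); intros m n Hm Hn.
    destruct (Hc (u m)) as [_ Hcm]; [apply (Hdecr _ m Hm), Hu|].
    destruct (Hc (u n)) as [_ Hcn]; [apply (Hdecr _ n Hn), Hu|].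
    apply dlt_weaken with (radius k + radius k); [|lra].
    apply dlt_triang with c; [apply dlt_sym|]; assumption.
  - destruct (Ucov l Hl) as [i Hi]; destruct (Uopen i l Hl Hi) as [r [Hr Hball]].
    destruct (radius_small (r / 3)) as [k Hk]; [lra|].
    destruct (Hlim (radius k) (radius_pos k)) as [N HN].
    destruct (HA k) as [_ [_ [c Hc]]].
    apply (proj1 (HA (S k))); exists (i :: nil); intros a Ha.
    exists i; split; [now left|]; apply Hball; [apply (proj1 (proj2 (HA (S k)))), Ha|].
    (* [l] is close to [u n], which shares the ball of radius [radius k] with [a] *)
    set (n := Nat.max N (S k)).
    destruct (Hc (u n)) as [_ Hcn]; [apply (Hdecr _ n), Hu; apply Nat.le_max_r|].
    apply dlt_weaken with (radius k + radius k + radius k); [|lra].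
    apply dlt_triang with c; [apply dlt_triang with (u n) | apply (Hc a Ha)].
    + apply dlt_sym, HN, Nat.le_max_l.
    + apply dlt_sym, Hcn.
Qed.

End PseudoMetric.

Lemma DG_totally_bounded {X : Type} (Phi : (X -> R) -> Prop) (G : (X -> X) -> Prop) :
  (forall d, 0 < d -> exists N, is_net (fun nu psi => Phi nu /\ DPhi_lt nu psi d) Phi N) ->
  (forall g phi, G g -> Phi phi -> Phi (fun x => phi (g x))) ->
  totally_bounded (DG_lt Phi) G.
Proof.
  intros HPhi HG eps Heps; set (d := eps / 5).
  destruct (HPhi d) as [N HN]; [unfold d; lra|].
  (* a test [nu] of the net [N] that lies outside [Phi] is answered by itself *)
  destruct (signature_net N N
              (fun nu nu' g => Phi nu -> DPhi_lt nu' (fun x => nu (g x)) d) G) as [l Hl].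
  { intros nu g Hnu Hg; destruct (classic (Phi nu)) as [HnuPhi | HnuPhi].
    - destruct (HN _ (HG g nu Hg HnuPhi)) as [nu' [Hnu' [_ Hclose]]]; eauto.
    - exists nu; split; [exact Hnu | intros; contradiction]. }
  exists l; intros g Hg; destruct (Hl g Hg) as [c [Hc [_ Hsig]]].
  exists c; split; [exact Hc|].
  exists (4 * d); split; [unfold d; lra|]; intros [phi x] Hphi; simpl in *.
  destruct (HN phi Hphi) as [nu [HnuN [HnuPhi Hnu]]].
  destruct (Hsig nu HnuN) as [nu' [Hcnu' Hgnu']].
  pose proof (sup_lt_le _ _ _ _ Hnu) as Hnu_phi.
  pose proof (sup_lt_le _ _ _ _ (Hcnu' HnuPhi) x I) as Hc_nu'.
  pose proof (sup_lt_le _ _ _ _ (Hgnu' HnuPhi) x I) as Hg_nu'.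
  simpl in Hnu_phi, Hc_nu', Hg_nu'.
  replace (4 * d) with (d + (d + d) + d) by ring.
  apply Rabs_sub_triang with (nu (g x)); [apply Rabs_sub_triang with (nu (c x))|].
  - rewrite Rabs_minus_sym; apply Hnu_phi; exact I.
  - apply Rabs_sub_triang with (nu' x); [rewrite Rabs_minus_sym|]; assumption.
  - apply Hnu_phi; exact I.
Qed.

Theorem mainTheorem6 (X : Type) (Phi : (X -> R) -> Prop) (G : (X -> X) -> Prop) :
  (exists x : X, True) ->
  (exists phi, Phi phi) ->
  (forall phi, Phi phi -> bounded_fun phi) ->
  compact_set DPhi_lt Phi ->
  subgroup_Homeo Phi G ->
  complete_set (DG_lt Phi) G ->
  compact_set (DG_lt Phi) G.
Proof.
  intros _ _ _ HPhi [Hhomeo _] Hcomplete.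
  apply complete_totally_bounded_compact; try assumption.
  - intros g1 g2 r; apply sup_dist_sym.
  - intros g1 g2 g3 r s; apply sup_dist_triang.
  - intros g1 g2 r s; apply sup_lt_weaken.
  - apply DG_totally_bounded.
    + intros d Hd; apply compact_net; try assumption.
      * intros f r; apply sup_dist_refl.
      * intros f1 f2 f3 r s; apply sup_dist_triang.
      * intros f1 f2 r; apply sup_lt_lower.
    + intros g phi Hg Hphi.
      destruct (Hhomeo g Hg) as [h [_ [_ [_ [_ Hpre]]]]]; apply Hpre, Hphi.
Qed.
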